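(* Let $\mathbf L$ be an algebraic lattice with an equa-interior operator $\eta$ satisfying \[ (\dagger)\qquad \tau(x)\le\tau(c)\ \&\ \eta(z)\le c\ \implies\ \eta(\eta(z)\vee\tau(x\wedge z))\le c \quad\text{for all }x,z,c\in L. \] Then $(\mathbf L,\eta)$ satisfies the four-coatom condition: whenever $a,b,c,d$ are coatoms of $\mathbf L$ such that $a\sim d$, $\eta(a)\not\le d$, $\eta(c)\le d$ and $\eta(c)=\eta(a\wedge b)$, then $\eta(c)=\eta(b\wedge d)$.
   Context: An equa-interior operator on an algebraic lattice $\mathbf L$ is a map $\eta:L\to L$ such that for all $x,y,z\in L$: (I1) $\eta(x)\le x$; (I2) $x\ge y$ implies $\eta(x)\ge\eta(y)$; (I3) $\eta^2(x)=\eta(x)$; (I4) $\eta(1)=1$; (I5) if $\eta(x)=u$ for all $x\in X\subseteq L$ then $\eta(\bigvee X)=u$; (I6) $\eta(x)\vee(y\wedge z)=(\eta(x)\vee y)\wedge(\eta(x)\vee z)$; (I7) the image $\eta(L)$ is the complete join subsemilattice of $L$ generated by the elements of $\eta(L)$ that are compact in $\mathbf L$; (I8) there is a compact element $w\in L$ with $\eta(w)=w$ such that the interval $[w,1]$ is isomorphic to the congruence lattice of a join semilattice with $0$. Define $\tau(x)=\bigvee\{z\in L:\eta(z)=\eta(x)\}$. For coatoms $a,d$, $a\sim d$ means the principal filter ${\uparrow}(a\wedge d)$ has exactly four elements, namely $\{1,a,d,a\wedge d\}$. *)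

From mathcomp Require Import all_boot all_order.
Set Implicit Arguments. Unset Strict Implicit. Unset Printing Implicit Defensive.
Import Order.LTheory.
Local Open Scope order_scope.

Section EquaInterior.
Context {disp : Order.disp_t} {L : tbLatticeType disp}.

Definition is_lub (X : L -> Prop) (s : L) : Prop :=
  (forall x, X x -> x <= s) /\ (forall u, (forall x, X x -> x <= u) -> s <= u).

Definition complete_lattice : Prop := forall X : L -> Prop, exists s, is_lub X s.

Definition compact (c : L) : Prop :=
  forall (X : L -> Prop) (s : L), is_lub X s -> c <= s ->
    exists F : seq L, (forall x, x \in F -> X x) /\ c <= \join_(x <- F) x.

Definition algebraic_lattice : Prop :=
  complete_lattice /\ forall x : L, is_lub (fun c => compact c /\ c <= x) x.

End EquaInterior.

(* congruences of a join semilattice with 0 (S, \/, 0): equivalence relations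
   compatible with the join (compatibility with the constant 0 is automatic) *)
Definition js_congruence {d'} {S : bJoinSemilatticeType d'} (th : S -> S -> Prop) : Prop :=
  (forall a, th a a) /\ (forall a b, th a b -> th b a) /\
  (forall a b c, th a b -> th b c -> th a c) /\
  (forall a b a' b', th a b -> th a' b' -> th (a `|` a') (b `|` b')).

Section EquaInterior2.
Context {disp : Order.disp_t} {L : tbLatticeType disp}.

Definition interval_iso_Con (w : L) : Prop :=
  exists (d' : Order.disp_t) (S : bJoinSemilatticeType d') (f : L -> S -> S -> Prop),
    (forall x, w <= x -> js_congruence (f x)) /\
    (forall x y, w <= x -> w <= y ->
       (x <= y <-> (forall a b, f x a b -> f y a b))) /\
    (forall th : S -> S -> Prop, js_congruence th ->
       exists x, w <= x /\ forall a b, f x a b <-> th a b).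

Definition equa_interior (eta : L -> L) : Prop :=
  (forall x, eta x <= x) /\
  (forall x y, y <= x -> eta y <= eta x) /\
  (forall x, eta (eta x) = eta x) /\
  (eta \top = \top) /\
  (forall (X : L -> Prop) (u s : L), (exists x, X x) ->
              (forall x, X x -> eta x = u) -> is_lub X s -> eta s = u) /\
  (forall x y z, eta x `|` (y `&` z) = (eta x `|` y) `&` (eta x `|` z)) /\
  (forall y, (exists x, eta x = y) <->
              exists X : L -> Prop,
                (forall c, X c -> compact c /\ exists x, eta x = c) /\ is_lub X y) /\
  (exists w, compact w /\ eta w = w /\ interval_iso_Con w).

Definition is_tau (eta tau : L -> L) : Prop :=
  forall x, is_lub (fun z => eta z = eta x) (tau x).

Definition coatom (a : L) : Prop :=
  a != \top /\ forall x, a <= x -> x = a \/ x = \top.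

Definition sim (a d : L) : Prop :=
  (forall x, a `&` d <= x <-> (x = \top \/ x = a \/ x = d \/ x = a `&` d)) /\
  (\top != a /\ \top != d /\ \top != a `&` d /\ a != d /\ a != a `&` d /\ d != a `&` d).

Definition four_coatom_condition (eta : L -> L) : Prop :=
  forall a b c d : L, coatom a -> coatom b -> coatom c -> coatom d ->
    sim a d -> ~ (eta a <= d) -> eta c <= d -> eta c = eta (a `&` b) ->
    eta c = eta (b `&` d).

End EquaInterior2.

From mathcomp Require Import all_boot all_order.
Import Order.LTheory.
Local Open Scope order_scope.

Set Implicit Arguments.
Unset Strict Implicit.

(* With
   x := a /\ d, z := b /\ d and c := d, the hypothesis on (L, eta) gives
   eta (eta (b /\ d) \/ tau (a /\ b /\ d)) <= d.  Now tau (a /\ b /\ d) = c,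
   because eta (a /\ b /\ d) = eta c and coatoms are fixed by tau; hence the
   join eta (b /\ d) \/ c is not the top, so eta (b /\ d) <= c, and the
   equality eta c = eta (b /\ d) follows by idempotence.  The premise
   tau (a /\ d) <= tau d = d is where a ~ d and eta a not <= d enter. *)

Section CoatomFacts.
Context {disp : Order.disp_t} {L : tbLatticeType disp}.

Lemma coatom_neq_top (a : L) : coatom a -> a != \top.
Proof. by case. Qed.

Lemma le_coatom_of_join (c x : L) : coatom c -> c `|` x != \top -> x <= c.
Proof.
move=> [_ maxc] cxT; case: (maxc _ (leUl c x)) => [<-|cxE]; first exact: leUr.
by rewrite cxE eqxx in cxT.
Qed.

End CoatomFacts.

Section EquaInteriorTau.
Context {disp : Order.disp_t} {L : tbLatticeType disp}.
Variables eta tau : L -> L.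
Hypothesis eta_le : forall x, eta x <= x.
Hypothesis eta_mono : forall x y, y <= x -> eta y <= eta x.
Hypothesis eta_idem : forall x, eta (eta x) = eta x.
Hypothesis eta_top : eta \top = \top.
Hypothesis eta_lub : forall (X : L -> Prop) (u s : L), (exists x, X x) ->
  (forall x, X x -> eta x = u) -> is_lub X s -> eta s = u.
Hypothesis tauP : is_tau eta tau.

Lemma le_eta_of_le x y : eta x <= y -> eta x <= eta y.
Proof. by move=> /eta_mono; rewrite eta_idem. Qed.

Lemma eta_meet_id x y : eta x <= y -> eta (x `&` y) = eta x.
Proof.
move=> exy; apply/le_anti; rewrite eta_mono ?leIl //=.
by apply: le_eta_of_le; rewrite lexI eta_le.
Qed.

Lemma le_tau x : x <= tau x.
Proof. exact: (proj1 (tauP x)). Qed.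

Lemma eta_tau x : eta (tau x) = eta x.
Proof. exact: eta_lub (ex_intro _ x erefl) (fun _ => id) (tauP x). Qed.

Lemma tau_eq x y : eta x = eta y -> tau x = tau y.
Proof.
have le_tau_of_eta u v : eta u = eta v -> tau u <= tau v.
  move=> euv; apply: (proj2 (tauP u)) => z ezu.
  by apply: (proj1 (tauP v)); rewrite ezu.
by move=> exy; apply/le_anti; rewrite !le_tau_of_eta.
Qed.

Lemma eta_neq_top_le x a : a != \top -> x <= a -> eta x != \top.
Proof.
move=> aT xa; apply: contraNneq aT => exT.
by rewrite -le1x -exT (le_trans (eta_le x)).
Qed.

Lemma tau_coatom m : coatom m -> tau m = m.
Proof.
move=> [mT maxm]; case: (maxm _ (le_tau m)) => // tauT.
by case/negP: (eta_neq_top_le mT (lexx m)); rewrite -eta_tau tauT eta_top.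
Qed.

Lemma tau_meet_sim_le a d : sim a d -> a != \top -> ~ eta a <= d ->
  tau (a `&` d) <= d.
Proof.
move=> [filter_ad _] aT nad.
case: (proj1 (filter_ad _) (le_tau _)) => [|[|[|]]] tauE.
- by case/negP: (eta_neq_top_le aT (leIl a d)); rewrite -eta_tau tauE eta_top.
- by case: nad; rewrite -tauE eta_tau (le_trans (eta_le _)) ?leIr.
- by rewrite tauE.
- by rewrite tauE leIr.
Qed.

Hypothesis dagger : forall x z c : L, tau x <= tau c -> eta z <= c ->
  eta (eta z `|` tau (x `&` z)) <= c.

Lemma four_coatom_of_dagger : four_coatom_condition eta.
Proof.
move=> a b c d ca _ cc cd sim_ad nad ecd ecab.
have ecb : eta c <= b by rewrite ecab (le_trans (eta_le _)) ?leIr.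
have tau_abd : tau (a `&` b `&` d) = c.
  by rewrite (@tau_eq _ c) ?tau_coatom // eta_meet_id -?ecab.
have := @dagger (a `&` d) (b `&` d) d.
rewrite (tau_coatom cd) meetACA meetxx tau_abd joinC.
move=> /(_ (tau_meet_sim_le sim_ad (coatom_neq_top ca) nad)).
move=> /(_ (le_trans (eta_le _) (leIr d b))) edc.
have ebdc : eta (b `&` d) <= c.
  apply: le_coatom_of_join => //; apply: contraNneq (coatom_neq_top cd) => cT.
  by rewrite -le1x -eta_top -cT.
by apply/le_anti; rewrite !le_eta_of_le ?lexI ?ecb.
Qed.

End EquaInteriorTau.

Theorem theorem6p3 (disp : Order.disp_t) (L : tbLatticeType disp) (eta tau : L -> L) :
  algebraic_lattice (L := L) ->
  equa_interior eta ->
  is_tau eta tau ->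
  (forall x z c : L, tau x <= tau c -> eta z <= c ->
     eta (eta z `|` tau (x `&` z)) <= c) ->
  four_coatom_condition eta.
Proof.
move=> _ [eta_le [eta_mono [eta_idem [eta_top [eta_lub _]]]]] tauP dagger.
exact: (four_coatom_of_dagger eta_le eta_mono eta_idem eta_top eta_lub tauP dagger).
Qed.
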